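(* $R(B_2,B_9) \ge 22$; that is, there exists a graph on $21$ vertices containing no copy of $B_2$ whose complement contains no copy of $B_9$.
   Context: For graphs $G,H$, the Ramsey number $R(G,H)$ is the smallest integer $N$ such that every red/blue coloring of the edges of $K_N$ contains a red copy of $G$ (as a subgraph, not necessarily induced) or a blue copy of $H$. The book $B_k$ is the graph on $k+2$ vertices consisting of an edge $uv$ together with $k$ further vertices, each adjacent exactly to $u$ and $v$. *)

From mathcomp Require Import all_boot.
Set Implicit Arguments. Unset Strict Implicit. Unset Printing Implicit Defensive.

Definition simple_graph (T : finType) (e : rel T) : Prop :=
  symmetric e /\ irreflexive e.

Definition gcompl (T : finType) (e : rel T) : rel T :=
  fun x y => (x != y) && ~~ e x y.

(* The book B_k on vertex set 'I_(k+2): vertices 0 and 1 form the spine uv,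
   the other k vertices are adjacent exactly to 0 and 1. *)
Definition book (k : nat) : rel 'I_(k.+2) :=
  fun i j => (i != j) && ((val i < 2) || (val j < 2)).

Definition contains_copy (S T : finType) (h : rel S) (g : rel T) : Prop :=
  exists f : S -> T, injective f /\ forall x y, h x y -> g (f x) (f y).

From mathcomp Require Import all_boot.

(* A copy of B_k sits on an edge uv (the spine) whose endpoints have at least
   k common neighbours; so a graph is B_k-free as soon as every edge has fewer
   than k common neighbours.  The witness is a graph on 21 vertices in which
   adjacent vertices have at most one common neighbour, while two distinct
   non-adjacent vertices have at most 8 common non-neighbours; both facts, and
   that the graph is simple, are checked by computation. *)

Lemma book_copy_spine (T : finType) (k : nat) (g : rel T) :
  contains_copy (@book k) g ->
  exists u v, g u v /\ k <= #|[set w | g u w && g v w]|.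
Proof.
move=> [f [f_inj f_hom]].
pose page (i : 'I_k) : T := f (inord i.+2).
have page_inj : injective page.
  move=> i j /f_inj /(congr1 val) /=.
  rewrite !inordK ?ltnS ?ltn_ord //.
  by move=> [] /val_inj.
exists (f (inord 0)), (f (inord 1)); split.
  by apply: f_hom; rewrite /book -val_eqE /= !inordK.
rewrite -[X in X <= _](card_ord k) -(card_imset _ page_inj).
apply/subset_leq_card/subsetP => _ /imsetP [i _ ->].
by rewrite inE; apply/andP; split; apply: f_hom;
  rewrite /book -val_eqE /= !inordK ?ltnS ?ltn_ord.
Qed.

Lemma card_ord_count (n : nat) (P : pred nat) :
  #|[set i : 'I_n | P i]| = count P (iota 0 n).
Proof.
by rewrite cardsE cardE -(val_enum_ord n) count_map enumT /enum_mem size_filter.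
Qed.

Lemma mem_iota_ord {n : nat} (i : 'I_n) : nat_of_ord i \in iota 0 n.
Proof. by rewrite mem_iota ltn_ord. Qed.

(* Graphs on 'I_n are presented by relations on nat so that the finite
   checks run over [iota 0 n]; evaluating the fintype enumeration of 'I_n
   with vm_compute is prohibitively slow. *)
Section GraphsOnInitialSegments.

Variables (n : nat) (gn : nat -> nat -> bool).

Definition nat_graph : rel 'I_n := fun i j => gn i j.

Definition ncompl (u v : nat) : bool := (u != v) && ~~ gn u v.

Definition simple_seq : bool :=
  all (fun u => ~~ gn u u && all (fun v => gn u v == gn v u) (iota 0 n))
      (iota 0 n).

Definition book_free_seq (k : nat) : bool :=
  all (fun u => all (fun v =>
         gn u v ==> (count (fun w => gn u w && gn v w) (iota 0 n) < k))
       (iota 0 n)) (iota 0 n).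

Lemma simple_seqP : simple_seq -> simple_graph nat_graph.
Proof.
move=> /allP simple_gn; split=> [i j | i].
  by have /andP [_ /allP sym] := simple_gn i (mem_iota_ord i);
  apply/eqP/sym/mem_iota_ord.
by have /andP [/negbTE] := simple_gn i (mem_iota_ord i).
Qed.

Lemma book_free_seqP (k : nat) : book_free_seq k ->
  ~ contains_copy (@book k) nat_graph.
Proof.
move=> /allP free /book_copy_spine [u [v [guv]]].
have /allP := free u (mem_iota_ord u).
move=> /(_ v (mem_iota_ord v)); rewrite /nat_graph in guv *.
by rewrite guv -card_ord_count ltnNge => /negP.
Qed.

End GraphsOnInitialSegments.

Lemma gcompl_nat_graph (n : nat) (gn : nat -> nat -> bool) :
  gcompl (nat_graph n gn) = nat_graph n (ncompl gn).
Proof. by []. Qed.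

Definition adjacency21 : seq (seq nat) :=
  [:: [:: 3; 4; 6; 8; 11; 16; 17; 18];   [:: 2; 4; 5; 6; 7; 9; 16; 18];
      [:: 1; 3; 6; 8; 11; 19; 20];       [:: 0; 2; 7; 9; 10; 12; 18; 19];
      [:: 0; 1; 7; 8; 12; 13; 14; 19];   [:: 1; 8; 10; 11; 12; 17; 18; 19];
      [:: 0; 1; 2; 10; 12; 13; 15; 17];  [:: 1; 3; 4; 10; 11; 15; 17; 20];
      [:: 0; 2; 4; 5; 9; 10; 15; 20];    [:: 1; 3; 8; 11; 13; 14; 15; 17];
      [:: 3; 5; 6; 7; 8; 13; 14; 16];    [:: 0; 2; 5; 7; 9; 12; 13; 16];
      [:: 3; 4; 5; 6; 11; 14; 15; 20];   [:: 4; 6; 9; 10; 11; 18; 19; 20];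
      [:: 4; 9; 10; 12; 16; 17];         [:: 6; 7; 8; 9; 12; 16; 18; 19];
      [:: 0; 1; 10; 11; 14; 15; 19; 20]; [:: 0; 5; 6; 7; 9; 14; 19; 20];
      [:: 0; 1; 3; 5; 13; 15; 20];       [:: 2; 3; 4; 5; 13; 15; 16; 17];
      [:: 2; 7; 8; 12; 13; 16; 17; 18]].

Definition graph21 (u v : nat) : bool := v \in nth [::] adjacency21 u.

Theorem mainTheorem5 :
  exists e : rel 'I_21,
    simple_graph e /\
    ~ contains_copy (@book 2) e /\
    ~ contains_copy (@book 9) (gcompl e).
Proof.
exists (nat_graph 21 graph21); split; [|split].
- by apply: simple_seqP; vm_compute.
- by apply: book_free_seqP; vm_compute.
- by rewrite gcompl_nat_graph; apply: book_free_seqP; vm_compute.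
Qed.
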